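(* Let $m\ge2$ and consider the single-family model. Let $q_m'$ be the probability that an individual of type $m$ is born at some time, but that eventually all individuals in the population have type $0$. If $N\mu^{1-2^{-(m-1)}}\to0$ as $N\to\infty$, then $q_m'\ll1/N$, i.e. $Nq_m'\to0$.
   Context: Single-family model: a population of $N$ individuals with types in $\{0,1,2,\dots\}$, with mutation rate $\mu=\mu(N)>0$. Initially one individual has type $1$ and the other $N-1$ have type $0$. Each individual independently lives for an exponentially distributed time with mean $1$, and is then replaced by a new individual whose parent is chosen uniformly at random from the $N$ individuals (including the one being replaced), inheriting the parent's type. Each individual of type $k\ge1$ experiences mutations at the times of a rate-$\mu$ Poisson process, each changing its type from $k$ to $k+1$; type $0$ individuals never mutate. Limits are as $N\to\infty$. *)

(* the single-family (Moran-type) model, encoded through its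
   uniformised embedded jump chain. *)
From Stdlib Require Import Reals List Arith Bool ClassicalEpsilon.
Open Scope R_scope.

(* A configuration of the population: the list of the N individuals' types. *)
Definition config := list nat.

Definition sumR (l : list R) : R := fold_right Rplus 0 l.

Definition set_at (s : config) (i : nat) (x : nat) : config :=
  firstn i s ++ x :: skipn (S i) s.

Definition all_zero (s : config) : bool := forallb (Nat.eqb 0) s.

Definition has_type (m : nat) (s : config) : bool := existsb (Nat.eqb m) s.

(* number of individuals of type >= 1 (those which mutate) *)
Definition n_mutating (s : config) : nat :=
  length (filter (fun k => negb (Nat.eqb k 0)) s).

(* total jump rate out of s (including "silent" jumps):
   N deaths (rate 1 each) + mu per individual of type >= 1 *)
Definition total_rate (N : nat) (mu : R) (s : config) : R :=
  INR N + mu * INR (n_mutating s).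

(* Transitions of the jump chain from s, as (probability, next configuration):
   - individual i dies (rate 1) and is replaced by a child of individual j,
     j uniform in {0..N-1} (including i): rate 1/N for each pair (i,j);
   - individual i of type k >= 1 mutates to type k+1: rate mu. *)
Definition transitions (N : nat) (mu : R) (s : config) : list (R * config) :=
  flat_map (fun i =>
     map (fun j => ((/ INR N) / total_rate N mu s, set_at s i (nth j s 0%nat)))
         (seq 0 N)) (seq 0 N)
  ++ map (fun i =>
        (if Nat.eqb (nth i s 0%nat) 0 then 0 else mu / total_rate N mu s,
         set_at s i (S (nth i s 0%nat)))) (seq 0 N).

(* p N mu m n s f = probability that, started from configuration s with
   flag f (f = "an individual of type m has already been born"), the chain
   has, within n jumps, reached the absorbing all-type-0 configuration with
   the flag set (i.e. a type-m individual was born along the way). *)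
Fixpoint p (N : nat) (mu : R) (m : nat) (n : nat) (s : config) (f : bool) : R :=
  match n with
  | O => if f && all_zero s then 1 else 0
  | S n' =>
      if all_zero s then (if f then 1 else 0)
      else sumR (map (fun ts => fst ts * p N mu m n' (snd ts) (f || has_type m (snd ts)))
                     (transitions N mu s))
  end.

Definition init_config (N : nat) : config := 1%nat :: repeat 0%nat (N - 1).

(* q'_m : probability that a type-m individual is born at some time but
   eventually all individuals have type 0 (limit of the nondecreasing
   finite-horizon probabilities). *)
Definition qprime (N : nat) (mu : R) (m : nat) : R :=
  epsilon (inhabits 0)
    (fun q => Un_cv (fun n => p N mu m n (init_config N) (has_type m (init_config N))) q).

From Stdlib Require Import Reals List Arith Bool ClassicalEpsilon Lra Lia Psatz.
Open Scope R_scope.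

(* Write Z(s) for the number of type-0 individuals of a configuration s and E for
   the one-step expectation operator of the jump chain.  Z/N is a martingale, and
   for a product weight F(s) = prod_i g(s_i) with g(0) = 1 we compute E[Z F]
   exactly.  With g(t) = 1 - r^(e_t), e_t = 1 - 2^-(m-t) (so g(m) = 0 and F kills
   every configuration containing a type-m individual), the identity
   (r^e_t)^2 = r r^e_(t+1) and the Cauchy-Schwarz inequality make Z F a
   submartingale wherever Z r >= N mu.  Hence, for a r = 2 mu,
      V = min (Z/N, Z/N (1 - F) + a (N - Z)/N)
   is a superharmonic majorant of the finite-horizon probabilities defining q'_m,
   which gives N q'_m <= (N - 1) r^e_1 + a.  The choice a = sqrt (N mu^e_1) yields
   N q'_m <= 3 sqrt (N mu^e_1) and the theorem. *)

Definition prodR (l : list R) : R := fold_right Rmult 1 l.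

Lemma sumR_app (l1 l2 : list R) : sumR (l1 ++ l2) = sumR l1 + sumR l2.
Proof. induction l1; simpl; [ring | rewrite IHl1; ring]. Qed.

Lemma sumR_flat_map {A B} (f : B -> R) (g : A -> list B) (l : list A) :
  sumR (map f (flat_map g l)) = sumR (map (fun x => sumR (map f (g x))) l).
Proof. induction l; simpl; auto. rewrite map_app, sumR_app, IHl; auto. Qed.

Lemma sumR_scal {A} (c : R) (f : A -> R) (l : list A) :
  sumR (map (fun x => c * f x) l) = c * sumR (map f l).
Proof. induction l; simpl; [ring | rewrite IHl; ring]. Qed.

Lemma sumR_plus {A} (f g : A -> R) (l : list A) :
  sumR (map (fun x => f x + g x) l) = sumR (map f l) + sumR (map g l).
Proof. induction l; simpl; [ring | rewrite IHl; ring]. Qed.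

Lemma sumR_minus {A} (f g : A -> R) (l : list A) :
  sumR (map (fun x => f x - g x) l) = sumR (map f l) - sumR (map g l).
Proof. induction l; simpl; [ring | rewrite IHl; ring]. Qed.

Lemma sumR_const {A} (c : R) (l : list A) :
  sumR (map (fun _ => c) l) = c * INR (length l).
Proof.
  induction l; [simpl; ring |].
  cbn [length map sumR fold_right]. rewrite S_INR. fold (sumR (map (fun _ => c) l)).
  rewrite IHl; ring.
Qed.

Lemma sumR_ext_in {A} (f g : A -> R) (l : list A) :
  (forall x, In x l -> f x = g x) -> sumR (map f l) = sumR (map g l).
Proof. intros H; rewrite (map_ext_in f g l H); auto. Qed.

Lemma sumR_le_in {A} (f g : A -> R) (l : list A) :
  (forall x, In x l -> f x <= g x) -> sumR (map f l) <= sumR (map g l).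
Proof.
  induction l; simpl; intros H; [lra |].
  pose proof (H a (or_introl eq_refl)).
  pose proof (IHl (fun x h => H x (or_intror h))). lra.
Qed.

Lemma sumR_nonneg_in {A} (f : A -> R) (l : list A) :
  (forall x, In x l -> 0 <= f x) -> 0 <= sumR (map f l).
Proof.
  intros H. rewrite <- (Rmult_0_l (INR (length l))), <- sumR_const.
  apply sumR_le_in; exact H.
Qed.

Lemma sum_seq_nth (g : nat -> R) (s : list nat) :
  sumR (map (fun i => g (nth i s 0%nat)) (seq 0 (length s))) = sumR (map g s).
Proof.
  induction s as [|a s IH]; [reflexivity |].
  change (seq 0 (length (a :: s))) with (0%nat :: seq 1 (length s)).
  rewrite map_cons, <- seq_shift, map_map. simpl sumR. rewrite IH. reflexivity.
Qed.

Lemma prodR_pos_in {A} (g : A -> R) (l : list A) :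
  (forall x, In x l -> 0 < g x) -> 0 < prodR (map g l).
Proof.
  induction l; simpl; intros H; [lra |].
  apply Rmult_lt_0_compat; [apply H; auto | apply IHl; auto].
Qed.

Lemma prodR_bounds {A} (g : A -> R) (l : list A) :
  (forall x, 0 <= g x <= 1) -> 0 <= prodR (map g l) <= 1.
Proof. intros H; induction l; simpl; [lra |]. pose proof (H a). nra. Qed.

Lemma prodR_pos_each {A} (g : A -> R) (l : list A) :
  (forall x, 0 <= g x <= 1) -> 0 < prodR (map g l) -> forall x, In x l -> 0 < g x.
Proof.
  intros H; induction l as [|a l IH]; simpl; intros Hp x Hx; [contradiction |].
  pose proof (prodR_bounds g l H). pose proof (H a).
  destruct Hx as [<- | Hx].
  - destruct (Req_dec (g a) 0) as [E|E]; [rewrite E in Hp |]; lra.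
  - apply IH; auto.
    destruct (Req_dec (prodR (map g l)) 0) as [E|E]; [rewrite E in Hp |]; lra.
Qed.

Lemma am_gm (x p q : R) : 0 <= p -> 0 <= q -> x ^ 2 <= p * q -> 2 * x <= p + q.
Proof.
  intros Hp Hq Hx. destruct (Rle_lt_dec (2 * x) (p + q)) as [H|H]; auto.
  pose proof (pow2_ge_0 (p - q)). nra.
Qed.

Lemma cauchy_schwarz_inv {A} (c g : A -> R) (l : list A) :
  (forall x, In x l -> 0 <= c x) -> (forall x, In x l -> 0 < g x) ->
  (sumR (map c l)) ^ 2 <=
  sumR (map (fun x => c x * g x) l) * sumR (map (fun x => c x * / g x) l).
Proof.
  induction l as [|a l IH]; intros Hc Hg; simpl; [lra |].
  specialize (IH (fun x h => Hc x (or_intror h)) (fun x h => Hg x (or_intror h))).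
  fold (sumR (map c l)) (sumR (map (fun x => c x * g x) l))
    (sumR (map (fun x => c x * / g x) l)) in *.
  set (X := sumR (map c l)) in *.
  set (P := sumR (map (fun x => c x * g x) l)) in *.
  set (Q := sumR (map (fun x => c x * / g x) l)) in *.
  assert (HP : 0 <= P).
  { apply sumR_nonneg_in; intros x h.
    pose proof (Hc x (or_intror h)); pose proof (Hg x (or_intror h)). nra. }
  assert (HQ : 0 <= Q).
  { apply sumR_nonneg_in; intros x h.
    pose proof (Hc x (or_intror h)); pose proof (Rinv_0_lt_compat _ (Hg x (or_intror h))).
    nra. }
  assert (HX : 0 <= X) by (apply sumR_nonneg_in; intros x h; apply Hc; right; exact h).
  pose proof (Hc a (or_introl eq_refl)) as Hca. pose proof (Hg a (or_introl eq_refl)) as Hga.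
  assert (Hinv : g a * / g a = 1) by (field; lra).
  assert (Hamgm : 2 * X <= P * / g a + g a * Q).
  { apply am_gm.
    - pose proof (Rinv_0_lt_compat _ Hga). nra.
    - nra.
    - replace (P * / g a * (g a * Q)) with (P * Q * (g a * / g a)) by ring.
      rewrite Hinv. lra. }
  nra.
Qed.

Lemma set_at_cons_0 (a : nat) (s : config) (x : nat) : set_at (a :: s) 0 x = x :: s.
Proof. reflexivity. Qed.

Lemma set_at_cons_S (a : nat) (s : config) (i x : nat) :
  set_at (a :: s) (S i) x = a :: set_at s i x.
Proof. reflexivity. Qed.

Lemma set_at_length (s : config) (i x : nat) :
  (i < length s)%nat -> length (set_at s i x) = length s.
Proof.
  revert i; induction s as [|a s IH]; intros i Hi; simpl in *; [lia |].
  destruct i; [reflexivity |]. rewrite set_at_cons_S; simpl. rewrite IH; auto; lia.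
Qed.

Lemma sum_set_at (g : nat -> R) (s : config) (i x : nat) : (i < length s)%nat ->
  sumR (map g (set_at s i x)) = sumR (map g s) - g (nth i s 0%nat) + g x.
Proof.
  revert i; induction s as [|a s IH]; intros i Hi; simpl in *; [lia |].
  destruct i.
  - rewrite set_at_cons_0; simpl. ring.
  - rewrite set_at_cons_S; simpl. rewrite IH by lia. ring.
Qed.

Lemma prod_set_at (g : nat -> R) (s : config) (i x : nat) :
  (i < length s)%nat -> g (nth i s 0%nat) <> 0 ->
  prodR (map g (set_at s i x)) = prodR (map g s) * g x / g (nth i s 0%nat).
Proof.
  revert i; induction s as [|a s IH]; intros i Hi Hg; simpl in *; [lia |].
  destruct i.
  - rewrite set_at_cons_0; simpl. field. exact Hg.
  - rewrite set_at_cons_S; simpl. rewrite IH by (auto; lia). field. exact Hg.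
Qed.

Definition zero_ind (t : nat) : R := if Nat.eqb t 0 then 1 else 0.
Definition zeros (s : config) : R := sumR (map zero_ind s).

Lemma zero_ind_01 (t : nat) : zero_ind t = 0 \/ zero_ind t = 1.
Proof. unfold zero_ind; destruct (Nat.eqb t 0); auto. Qed.

Lemma zero_ind_S (t : nat) : zero_ind (S t) = 0.
Proof. reflexivity. Qed.

Lemma zero_ind_mul (h : nat -> R) (t : nat) : h 0%nat = 1 -> zero_ind t * h t = zero_ind t.
Proof. intros H. unfold zero_ind. destruct t; simpl; [rewrite H |]; ring. Qed.

Lemma sum_split_zero (h : nat -> R) (l : config) : h 0%nat = 1 ->
  sumR (map h l) = zeros l + sumR (map (fun t => (1 - zero_ind t) * h t) l).
Proof.
  intros H; unfold zeros; induction l; simpl; [ring |]. rewrite IHl.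
  unfold zero_ind; destruct a; simpl; [rewrite H |]; ring.
Qed.

Lemma length_split (l : config) :
  INR (length l) = zeros l + sumR (map (fun t => 1 - zero_ind t) l).
Proof.
  rewrite <- (Rmult_1_l (INR (length l))), <- sumR_const, (sum_split_zero _ l) by reflexivity.
  f_equal. apply sumR_ext_in; intros; ring.
Qed.

Lemma zeros_bounds (s : config) : 0 <= zeros s <= INR (length s).
Proof.
  rewrite length_split. pose proof (zero_ind_01 0).
  assert (0 <= zeros s) by (apply sumR_nonneg_in; intros t _; destruct (zero_ind_01 t); lra).
  assert (0 <= sumR (map (fun t => 1 - zero_ind t) s))
    by (apply sumR_nonneg_in; intros t _; destruct (zero_ind_01 t); lra).
  lra.
Qed.

Lemma zeros_set_at (s : config) (i x : nat) : (i < length s)%nat ->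
  zeros (set_at s i x) = zeros s - zero_ind (nth i s 0%nat) + zero_ind x.
Proof. intros; unfold zeros; apply sum_set_at; auto. Qed.

Lemma n_mutating_eq (s : config) : INR (n_mutating s) = INR (length s) - zeros s.
Proof.
  unfold n_mutating, zeros. induction s; [simpl; ring |].
  cbn [filter map]. unfold zero_ind at 1.
  destruct (Nat.eqb a 0); cbn [negb length sumR fold_right]; rewrite ?S_INR;
    fold (sumR (map zero_ind s)); rewrite IHs; ring.
Qed.

Lemma all_zero_zeros (s : config) : all_zero s = true -> zeros s = INR (length s).
Proof.
  unfold all_zero, zeros. induction s; [reflexivity |]. cbn [forallb map length].
  intros H. apply andb_true_iff in H. destruct H as [H1 H2]. apply Nat.eqb_eq in H1. subst a.
  rewrite S_INR, <- IHs by auto. unfold sumR; cbn [fold_right]. unfold zero_ind; simpl. ring.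
Qed.

Lemma total_rate_pos (N : nat) (mu : R) (s : config) :
  (1 <= N)%nat -> 0 <= mu -> length s = N -> 0 < total_rate N mu s.
Proof.
  intros HN Hmu Hl. unfold total_rate. rewrite n_mutating_eq.
  pose proof (zeros_bounds s). rewrite Hl in *. apply le_INR in HN. simpl in HN.
  assert (0 <= mu * (INR N - zeros s)) by (apply Rmult_le_pos; lra). lra.
Qed.

Definition E (N : nat) (mu : R) (s : config) (G : config -> R) : R :=
  sumR (map (fun ts => fst ts * G (snd ts)) (transitions N mu s)).

Definition resample_sum (N : nat) (s : config) (G : config -> R) : R :=
  sumR (map (fun i => sumR (map (fun j => G (set_at s i (nth j s 0%nat))) (seq 0 N)))
            (seq 0 N)).

Definition mutation_sum (N : nat) (s : config) (G : config -> R) : R :=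
  sumR (map (fun i => (1 - zero_ind (nth i s 0%nat)) * G (set_at s i (S (nth i s 0%nat))))
            (seq 0 N)).

Lemma E_expand (N : nat) (mu : R) (s : config) (G : config -> R) :
  E N mu s G = / INR N / total_rate N mu s * resample_sum N s G
               + mu / total_rate N mu s * mutation_sum N s G.
Proof.
  unfold E, transitions, resample_sum, mutation_sum.
  rewrite map_app, sumR_app, sumR_flat_map. f_equal.
  - rewrite <- sumR_scal. apply sumR_ext_in; intros i _.
    rewrite map_map; simpl. rewrite <- sumR_scal. reflexivity.
  - rewrite map_map, <- sumR_scal. apply sumR_ext_in; intros i _. simpl.
    unfold zero_ind. destruct (Nat.eqb (nth i s 0%nat) 0); ring.
Qed.

Lemma E_ext (N : nat) (mu : R) (s : config) (G1 G2 : config -> R) :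
  (forall x, G1 x = G2 x) -> E N mu s G1 = E N mu s G2.
Proof. intros H. unfold E. apply sumR_ext_in. intros; rewrite H; auto. Qed.

Lemma E_lin (N : nat) (mu : R) (s : config) (G1 G2 G3 : config -> R) (a b c : R) :
  E N mu s (fun x => a * G1 x + b * G2 x + c * G3 x)
  = a * E N mu s G1 + b * E N mu s G2 + c * E N mu s G3.
Proof. unfold E. induction (transitions N mu s); simpl; [ring | rewrite IHl; ring]. Qed.

Lemma E_zero (N : nat) (mu : R) (s : config) : E N mu s (fun _ => 0) = 0.
Proof. unfold E. induction (transitions N mu s); simpl; [ring | rewrite IHl; ring]. Qed.

Lemma E_mono (N : nat) (mu : R) (s : config) (G1 G2 : config -> R) :
  (1 <= N)%nat -> 0 <= mu -> length s = N ->
  (forall x, length x = N -> G1 x <= G2 x) -> E N mu s G1 <= E N mu s G2.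
Proof.
  intros HN Hmu Hl H. pose proof (total_rate_pos N mu s HN Hmu Hl) as HR.
  assert (HNp : 0 < INR N) by (apply lt_0_INR; lia).
  rewrite !E_expand. unfold resample_sum, mutation_sum.
  apply Rplus_le_compat; apply Rmult_le_compat_l.
  - apply Rmult_le_pos; left; apply Rinv_0_lt_compat; auto.
  - apply sumR_le_in. intros i Hi. apply in_seq in Hi. apply sumR_le_in. intros j _.
    apply H. rewrite set_at_length; lia.
  - unfold Rdiv. apply Rmult_le_pos; [auto | left; apply Rinv_0_lt_compat; auto].
  - apply sumR_le_in. intros i Hi. apply in_seq in Hi. apply Rmult_le_compat_l.
    + destruct (zero_ind_01 (nth i s 0%nat)) as [H0|H0]; rewrite H0; lra.
    + apply H. rewrite set_at_length; lia.
Qed.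

Lemma E_one (N : nat) (mu : R) (s : config) :
  (1 <= N)%nat -> 0 <= mu -> length s = N -> E N mu s (fun _ => 1) = 1.
Proof.
  intros HN Hmu Hl. pose proof (total_rate_pos N mu s HN Hmu Hl) as HR.
  rewrite E_expand. unfold resample_sum, mutation_sum.
  rewrite (sumR_ext_in _ (fun _ => 1 * INR N))
    by (intros; rewrite sumR_const, length_seq; reflexivity).
  rewrite sumR_const, length_seq.
  rewrite (sumR_ext_in _ (fun i => (fun t => 1 - zero_ind t) (nth i s 0%nat)))
    by (intros; simpl; ring).
  subst N. rewrite (sum_seq_nth (fun t => 1 - zero_ind t)), sumR_minus, sumR_const.
  fold (zeros s).
  assert (0 < INR (length s)) by (apply lt_0_INR; lia).
  unfold total_rate in *. rewrite n_mutating_eq in *. field. lra.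
Qed.

Lemma resample_sum_ZF (g : nat -> R) (s : config) :
  g 0%nat = 1 -> (forall t, In t s -> 0 < g t) ->
  resample_sum (length s) s (fun x => zeros x * prodR (map g x)) =
  prodR (map g s) * zeros s *
    (sumR (map g s) * sumR (map (fun t => / g t) s)
     + sumR (map (fun t => / g t) s) - sumR (map g s)).
Proof.
  intros Hg0 Hgp. unfold resample_sum.
  pose proof (eq_refl (zeros s)) as HZ. unfold zeros at 2 in HZ.
  set (Z := zeros s) in *. set (F := prodR (map g s)).
  set (A := sumR (map g s)). set (B := sumR (map (fun t => / g t) s)).
  rewrite (sumR_ext_in _
    (fun i => (fun t => F * (Z * A + Z) * / g t - F * A * zero_ind t) (nth i s 0%nat))).
  - rewrite (sum_seq_nth (fun t => F * (Z * A + Z) * / g t - F * A * zero_ind t)).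
    rewrite sumR_minus, !sumR_scal, <- HZ. fold B. ring.
  - intros i Hi. apply in_seq in Hi.
    assert (Hgi : 0 < g (nth i s 0%nat)) by (apply Hgp, nth_In; lia).
    set (u := nth i s 0%nat) in *.
    rewrite (sumR_ext_in _
      (fun j => (fun t => F / g u * ((Z - zero_ind u) * g t + zero_ind t)) (nth j s 0%nat))).
    + rewrite (sum_seq_nth (fun t => F / g u * ((Z - zero_ind u) * g t + zero_ind t))).
      rewrite sumR_scal, sumR_plus, sumR_scal, <- HZ. fold A.
      rewrite <- (zero_ind_mul (fun t => / g t) u) at 2 by (rewrite Hg0; apply Rinv_1).
      field. lra.
    + intros j _. unfold Z. rewrite zeros_set_at, prod_set_at by (lia || apply Rgt_not_eq, Hgi). fold F.
      fold u. rewrite <- (zero_ind_mul g (nth j s 0%nat)) at 2 by auto. field. lra.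
Qed.

Lemma mutation_sum_ZF (g : nat -> R) (s : config) :
  (forall t, In t s -> 0 < g t) ->
  mutation_sum (length s) s (fun x => zeros x * prodR (map g x)) =
  zeros s * prodR (map g s) * sumR (map (fun t => (1 - zero_ind t) * (g (S t) / g t)) s).
Proof.
  intros Hgp. unfold mutation_sum.
  rewrite (sumR_ext_in _ (fun i => (fun t => zeros s * prodR (map g s) *
                               ((1 - zero_ind t) * (g (S t) / g t))) (nth i s 0%nat))).
  - rewrite (sum_seq_nth (fun t => zeros s * prodR (map g s) *
                                   ((1 - zero_ind t) * (g (S t) / g t)))).
    apply sumR_scal.
  - intros i Hi. apply in_seq in Hi.
    assert (Hgi : 0 < g (nth i s 0%nat)) by (apply Hgp, nth_In; lia).
    rewrite zeros_set_at, prod_set_at, zero_ind_S by (lia || apply Rgt_not_eq, Hgi).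
    destruct (zero_ind_01 (nth i s 0%nat)) as [H0|H0]; rewrite H0; field; lra.
Qed.

Lemma E_ZF (N : nat) (mu : R) (s : config) (g : nat -> R) :
  length s = N -> g 0%nat = 1 -> (forall t, In t s -> 0 < g t) ->
  E N mu s (fun x => zeros x * prodR (map g x)) =
  / INR N / total_rate N mu s * (prodR (map g s) * zeros s *
      (sumR (map g s) * sumR (map (fun t => / g t) s)
       + sumR (map (fun t => / g t) s) - sumR (map g s)))
  + mu / total_rate N mu s * (zeros s * prodR (map g s) *
      sumR (map (fun t => (1 - zero_ind t) * (g (S t) / g t)) s)).
Proof.
  intros <- Hg0 Hgp. rewrite E_expand, resample_sum_ZF, mutation_sum_ZF; auto.
Qed.

(* The case g = 1: the number of type-0 individuals is a martingale. *)
Lemma E_zeros (N : nat) (mu : R) (s : config) :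
  (1 <= N)%nat -> 0 <= mu -> length s = N -> E N mu s zeros = zeros s.
Proof.
  intros HN Hmu Hl. pose proof (total_rate_pos N mu s HN Hmu Hl) as HR.
  assert (Hones : forall x : config, prodR (map (fun _ => 1) x) = 1)
    by (induction x; simpl; [reflexivity | rewrite IHx; ring]).
  rewrite (E_ext N mu s zeros (fun x => zeros x * prodR (map (fun _ => 1) x)))
    by (intros; rewrite Hones; ring).
  rewrite E_ZF by (auto; intros; lra).
  rewrite Hones, (sumR_ext_in (fun _ => / 1) (fun _ => 1)) by (intros; apply Rinv_1).
  rewrite (sumR_ext_in (fun t => (1 - zero_ind t) * (1 / 1)) (fun t => 1 - zero_ind t))
    by (intros; field).
  pose proof (length_split s) as Hsplit.
  rewrite sumR_const. unfold total_rate in *. rewrite n_mutating_eq in *. subst N.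
  assert (0 < INR (length s)) by (apply lt_0_INR; lia).
  replace (sumR (map (fun t => 1 - zero_ind t) s)) with (INR (length s) - zeros s) by lra.
  field. lra.
Qed.

Lemma sum_local_terms (g : nat -> R) (Z n mu : R) (s : config) :
  sumR (map (fun t => (1 - zero_ind t) * (Z * (g t + / g t - 2) + (/ g t - g t)
                        - n * mu * (1 - g (S t) / g t))) s)
  = Z * (sumR (map (fun t => (1 - zero_ind t) * g t) s)
         + sumR (map (fun t => (1 - zero_ind t) * / g t) s)
         - 2 * sumR (map (fun t => 1 - zero_ind t) s))
    + (sumR (map (fun t => (1 - zero_ind t) * / g t) s)
       - sumR (map (fun t => (1 - zero_ind t) * g t) s))
    - n * mu * (sumR (map (fun t => 1 - zero_ind t) s)
       - sumR (map (fun t => (1 - zero_ind t) * (g (S t) / g t)) s)).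
Proof. induction s; simpl; [ring | rewrite IHs; ring]. Qed.

(* Submartingale criterion for Z F: it suffices that every entry of positive
   type satisfies a local inequality; Cauchy-Schwarz absorbs the cross terms. *)
Lemma ZF_submartingale (N : nat) (mu : R) (s : config) (g : nat -> R) :
  (1 <= N)%nat -> 0 <= mu -> length s = N ->
  g 0%nat = 1 -> (forall t, In t s -> 0 < g t) -> 0 < zeros s ->
  (forall t, In t s -> 0 <= (1 - zero_ind t) *
     (zeros s * (g t + / g t - 2) + (/ g t - g t) - INR N * mu * (1 - g (S t) / g t))) ->
  zeros s * prodR (map g s) <= E N mu s (fun x => zeros x * prodR (map g x)).
Proof.
  intros HN Hmu Hl Hg0 Hgp HZ Hloc.
  pose proof (total_rate_pos N mu s HN Hmu Hl) as HR.
  pose proof (prodR_pos_in g s Hgp) as HF.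
  pose proof (sumR_nonneg_in _ _ Hloc) as Hsum.
  pose proof (cauchy_schwarz_inv (fun t => 1 - zero_ind t) g s
    (fun t _ => ltac:(destruct (zero_ind_01 t) as [H|H]; rewrite H; lra)) Hgp) as HCS.
  assert (HX : 0 <= sumR (map (fun t => 1 - zero_ind t) s))
    by (apply sumR_nonneg_in; intros t _; destruct (zero_ind_01 t) as [H|H]; rewrite H; lra).
  rewrite sum_local_terms in Hsum.
  rewrite E_ZF, (sum_split_zero g s Hg0), (sum_split_zero (fun t => / g t) s)
    by (auto; rewrite Hg0; apply Rinv_1).
  pose proof (length_split s) as HNs.
  unfold total_rate in *. rewrite n_mutating_eq in *. rewrite Hl in *.
  set (Z := zeros s) in *. set (F := prodR (map g s)) in *.
  set (A := sumR (map (fun t => (1 - zero_ind t) * g t) s)) in *.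
  set (B := sumR (map (fun t => (1 - zero_ind t) * / g t) s)) in *.
  set (X := sumR (map (fun t => 1 - zero_ind t) s)) in *.
  set (M := sumR (map (fun t => (1 - zero_ind t) * (g (S t) / g t)) s)) in *.
  assert (HNp : 0 < INR N) by (apply lt_0_INR; lia).
  set (n := INR N) in *.
  assert (Key : n * n + n * mu * X - n * mu * M <= (Z + A) * (Z + B) + (Z + B) - (Z + A)).
  { assert (Hnn : n * n = Z * Z + 2 * Z * X + X * X) by (rewrite HNs; ring). lra. }
  replace (n - Z) with X in * by lra.
  set (R0 := n + mu * X) in *.
  apply Rle_trans with
    (/ n / R0 * (F * Z * (n * n + n * mu * X - n * mu * M)) + mu / R0 * (Z * F * M)).
  - right. unfold R0. field. split; apply Rgt_not_eq; nra.
  - apply Rplus_le_compat_r. apply Rmult_le_compat_l.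
    + apply Rmult_le_pos; left; apply Rinv_0_lt_compat; auto.
    + apply Rmult_le_compat_l; [nra | exact Key].
Qed.

Definition expo (m t : nat) : R := 1 - / 2 ^ (m - t).

Definition weight (m : nat) (r : R) (t : nat) : R :=
  if Nat.eqb t 0 then 1 else 1 - Rpower r (expo m t).

Definition Fw (m : nat) (r : R) (s : config) : R := prodR (map (weight m r) s).

Lemma Rpower_pos (x y : R) : 0 < Rpower x y.
Proof. unfold Rpower; apply exp_pos. Qed.

Lemma Rpower_one_base (y : R) : Rpower 1 y = 1.
Proof. unfold Rpower. rewrite ln_1, Rmult_0_r, exp_0. reflexivity. Qed.

Lemma Rpower_le_1 (r e : R) : 0 < r <= 1 -> 0 <= e -> Rpower r e <= 1.
Proof. intros Hr He. rewrite <- (Rpower_one_base e). apply Rle_Rpower_l; lra. Qed.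

Lemma expo_bounds (m t : nat) : 0 <= expo m t < 1.
Proof.
  unfold expo. pose proof (pow_R1_Rle 2 (m - t) ltac:(lra)).
  assert (0 < / 2 ^ (m - t)) by (apply Rinv_0_lt_compat; lra).
  assert (/ 2 ^ (m - t) <= 1) by (rewrite <- Rinv_1; apply Rinv_le_contravar; lra).
  lra.
Qed.

Lemma expo_first_pos (m : nat) : (2 <= m)%nat -> 0 < expo m 1.
Proof.
  intros Hm. unfold expo. replace (m - 1)%nat with (S (m - 2)) by lia. simpl.
  pose proof (pow_R1_Rle 2 (m - 2) ltac:(lra)).
  assert (/ (2 * 2 ^ (m - 2)) <= / 2) by (apply Rinv_le_contravar; lra).
  lra.
Qed.

Lemma weight_bounds (m : nat) (r : R) (t : nat) : 0 < r <= 1 -> 0 <= weight m r t <= 1.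
Proof.
  intros Hr. unfold weight. destruct (Nat.eqb t 0); [lra |].
  pose proof (Rpower_pos r (expo m t)).
  pose proof (Rpower_le_1 r (expo m t) Hr (proj1 (expo_bounds m t))). lra.
Qed.

(* e_m = 0, so g(m) = 0: F vanishes once a type-m individual is present. *)
Lemma Fw_has_type (m : nat) (r : R) (s : config) :
  (1 <= m)%nat -> 0 < r -> has_type m s = true -> Fw m r s = 0.
Proof.
  intros Hm Hr. unfold has_type, Fw. induction s; simpl; [discriminate |].
  intros H. apply orb_true_iff in H. destruct H as [H|H].
  - apply Nat.eqb_eq in H. subst a. unfold weight at 1.
    destruct (Nat.eqb m 0) eqn:E; [apply Nat.eqb_eq in E; lia |].
    unfold expo. rewrite Nat.sub_diag. simpl.
    replace (1 - / 1) with 0 by (rewrite Rinv_1; ring). rewrite Rpower_O by auto. ring.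
  - rewrite IHs by auto. ring.
Qed.

(* The defining identity of the exponents: (r^e_t)^2 = r r^e_(t+1). *)
Lemma Rpower_expo_square (m : nat) (r : R) (t : nat) : 0 < r -> (t < m)%nat ->
  Rpower r (expo m t) * Rpower r (expo m t) = r * Rpower r (expo m (S t)).
Proof.
  intros Hr Ht. rewrite <- Rpower_plus.
  transitivity (Rpower r 1 * Rpower r (expo m (S t))); [| rewrite Rpower_1; auto].
  rewrite <- Rpower_plus. f_equal.
  unfold expo. replace (m - t)%nat with (S (m - S t)) by lia. simpl.
  pose proof (pow_R1_Rle 2 (m - S t) ltac:(lra)). field. lra.
Qed.

Lemma weight_local_condition (m : nat) (r : R) (N : nat) (mu Z : R) (t : nat) :
  0 < r <= 1 -> 0 <= mu -> 0 <= Z -> INR N * mu <= Z * r -> 0 < weight m r t ->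
  0 <= (1 - zero_ind t) * (Z * (weight m r t + / weight m r t - 2)
        + (/ weight m r t - weight m r t) - INR N * mu * (1 - weight m r (S t) / weight m r t)).
Proof.
  intros Hr Hmu HZ HZr Hw.
  destruct t as [|t]; [unfold zero_ind; simpl; lra |].
  rewrite zero_ind_S, Rminus_0_r, Rmult_1_l.
  assert (Htm : (S t < m)%nat).
  { destruct (Nat.lt_ge_cases (S t) m) as [H|H]; auto. exfalso.
    unfold weight, expo in Hw; simpl in Hw. replace (m - S t)%nat with 0%nat in Hw by lia.
    simpl in Hw. rewrite Rinv_1, Rminus_diag, Rpower_O in Hw by lra. lra. }
  pose proof (Rpower_expo_square m r (S t) (proj1 Hr) Htm) as Hsq.
  pose proof (weight_bounds m r (S t) Hr) as Hwb.
  unfold weight in *. simpl in *.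
  set (u := Rpower r (expo m (S t))) in *. set (u' := Rpower r (expo m (S (S t)))) in *.
  assert (Hu : 0 <= u) by (left; apply Rpower_pos).
  assert (Hu' : 0 <= u') by (left; apply Rpower_pos).
  set (w := 1 - u) in *.
  assert (Hexp : Z * (w + / w - 2) + (/ w - w) - INR N * mu * (1 - (1 - u') / w)
                 = (Z * (u * u) + (1 - w * w) - INR N * mu * (u' - u)) / w).
  { unfold w. field. unfold w in Hw. lra. }
  rewrite Hexp. apply Rmult_le_pos; [| left; apply Rinv_0_lt_compat; auto].
  rewrite Hsq.
  assert (INR N * mu * u' <= Z * r * u') by (apply Rmult_le_compat_r; auto).
  assert (0 <= INR N * mu * u) by (apply Rmult_le_pos; [apply Rmult_le_pos; [apply pos_INR |] |]; auto).
  assert (0 <= 1 - w * w) by nra.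
  nra.
Qed.

Lemma p_le_superharmonic (N : nat) (mu : R) (m : nat) (V : config -> bool -> R) :
  (1 <= N)%nat -> 0 <= mu ->
  (forall s f, length s = N -> 0 <= V s f) ->
  (forall s, length s = N -> all_zero s = true -> 1 <= V s true) ->
  (forall s f, length s = N -> all_zero s = false ->
     E N mu s (fun x => V x (f || has_type m x)) <= V s f) ->
  forall n s f, length s = N -> p N mu m n s f <= V s f.
Proof.
  intros HN Hmu Hnn Habs Hsup. induction n as [|n IH]; intros s f Hl; simpl.
  - destruct (f && all_zero s) eqn:Hfz; [| apply Hnn; auto].
    apply andb_true_iff in Hfz as [-> Hz]. apply Habs; auto.
  - destruct (all_zero s) eqn:Hz; [destruct f; [apply Habs | apply Hnn]; auto |].
    change (E N mu s (fun x => p N mu m n x (f || has_type m x)) <= V s f).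
    eapply Rle_trans; [apply E_mono; auto; intros x Hx; apply IH; auto | apply Hsup; auto].
Qed.

Lemma p_nonneg (N : nat) (mu : R) (m n : nat) (s : config) (f : bool) :
  (1 <= N)%nat -> 0 <= mu -> length s = N -> 0 <= p N mu m n s f.
Proof.
  intros HN Hmu. revert s f. induction n as [|n IH]; intros s f Hl; simpl.
  - destruct (f && all_zero s); lra.
  - destruct (all_zero s); [destruct f; lra |].
    change (0 <= E N mu s (fun x => p N mu m n x (f || has_type m x))).
    rewrite <- (E_zero N mu s). apply E_mono; auto.
Qed.

Lemma p_mono (N : nat) (mu : R) (m n : nat) (s : config) (f : bool) :
  (1 <= N)%nat -> 0 <= mu -> length s = N -> p N mu m n s f <= p N mu m (S n) s f.
Proof.
  intros HN Hmu. revert s f. induction n as [|n IH]; intros s f Hl.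
  - simpl. destruct (all_zero s).
    + destruct f; simpl; lra.
    + rewrite andb_false_r.
      change (0 <= E N mu s (fun x => p N mu m 0 x (f || has_type m x))).
      rewrite <- (E_zero N mu s). apply E_mono; auto. intros x Hx. apply p_nonneg; auto.
  - change (p N mu m (S n) s f) with
      (if all_zero s then (if f then 1 else 0)
       else E N mu s (fun x => p N mu m n x (f || has_type m x))).
    change (p N mu m (S (S n)) s f) with
      (if all_zero s then (if f then 1 else 0)
       else E N mu s (fun x => p N mu m (S n) x (f || has_type m x))).
    destruct (all_zero s); [lra |]. apply E_mono; auto.
Qed.

Lemma init_length (N : nat) : (1 <= N)%nat -> length (init_config N) = N.
Proof. intros. unfold init_config. simpl. rewrite repeat_length. lia. Qed.

Lemma qprime_limit (N : nat) (mu : R) (m : nat) : (1 <= N)%nat -> 0 <= mu ->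
  Un_cv (fun n => p N mu m n (init_config N) (has_type m (init_config N))) (qprime N mu m).
Proof.
  intros HN Hmu. pose proof (init_length N HN) as Hl.
  set (u := fun n => p N mu m n (init_config N) (has_type m (init_config N))).
  assert (Hgr : Un_growing u) by (intros n; apply p_mono; auto).
  assert (Hle1 : forall n, u n <= 1).
  { intros n. apply (p_le_superharmonic N mu m (fun _ _ => 1)); auto; intros; try lra.
    rewrite E_one; auto; lra. }
  destruct (growing_cv u Hgr) as [l Hl'].
  { exists 1. intros x [n ->]. apply Hle1. }
  unfold qprime. apply (epsilon_spec (inhabits 0) (fun q => Un_cv u q)). exists l; exact Hl'.
Qed.

Lemma qprime_nonneg (N : nat) (mu : R) (m : nat) :
  (1 <= N)%nat -> 0 <= mu -> 0 <= qprime N mu m.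
Proof.
  intros HN Hmu. pose proof (init_length N HN) as Hl.
  assert (Hgr : Un_growing (fun n => p N mu m n (init_config N) (has_type m (init_config N))))
    by (intros n; apply p_mono; auto).
  eapply Rle_trans; [| apply (growing_ineq _ _ Hgr (qprime_limit N mu m HN Hmu) 0)].
  apply p_nonneg; auto.
Qed.

(* The majorant V s f, where f records whether a type-m individual has been born.
   Z/N (zero_frac) bounds the probability of absorption at the all-zero
   configuration; before a type-m birth it is improved to min (Z/N, majorant). *)

Definition zero_frac (N : nat) (s : config) : R := zeros s / INR N.

Definition majorant (N m : nat) (r a : R) (s : config) : R :=
  zero_frac N s * (1 - Fw m r s) + a * (INR N - zeros s) / INR N.

Definition Vmaj (N m : nat) (r a : R) (s : config) (f : bool) : R :=
  if f then zero_frac N s else Rmin (zero_frac N s) (majorant N m r a s).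

Lemma E_zero_frac (N : nat) (mu : R) (s : config) :
  (1 <= N)%nat -> 0 <= mu -> length s = N -> E N mu s (zero_frac N) = zero_frac N s.
Proof.
  intros HN Hmu Hl.
  rewrite (E_ext N mu s _ (fun x => / INR N * zeros x + 0 * zeros x + 0 * zeros x))
    by (intros; unfold zero_frac, Rdiv; ring).
  rewrite E_lin, E_zeros by auto. unfold zero_frac, Rdiv. ring.
Qed.

Lemma Vmaj_nonneg (N m : nat) (r a : R) (s : config) (f : bool) :
  (1 <= N)%nat -> 0 < r <= 1 -> 0 <= a -> length s = N -> 0 <= Vmaj N m r a s f.
Proof.
  intros HN Hr Ha Hl.
  pose proof (prodR_bounds (weight m r) s (fun t => weight_bounds m r t Hr)) as HF.
  pose proof (zeros_bounds s) as HZ. rewrite Hl in HZ.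
  assert (HN' : 0 < / INR N) by (apply Rinv_0_lt_compat, lt_0_INR; lia).
  assert (Hh : 0 <= zero_frac N s) by (unfold zero_frac, Rdiv; nra).
  assert (0 <= majorant N m r a s).
  { unfold majorant, Rdiv. fold (Fw m r s) in HF.
    assert (0 <= a * (INR N - zeros s)) by nra. nra. }
  unfold Vmaj. destruct f; [lra | apply Rmin_glb; lra].
Qed.

(* Where the majorant is active, it is superharmonic: there Z r >= N mu, so
   Z F is a submartingale. *)
Lemma majorant_super (N m : nat) (mu a r : R) (s : config) :
  (1 <= N)%nat -> (1 <= m)%nat -> 0 < mu -> 0 < a <= 1 -> 0 < r <= 1 -> a * r = 2 * mu ->
  length s = N -> majorant N m r a s < zero_frac N s ->
  E N mu s (majorant N m r a) <= majorant N m r a s.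
Proof.
  intros HN Hm Hmu Ha Hr Har Hl Hact.
  assert (HNp : 0 < INR N) by (apply lt_0_INR; lia).
  pose proof (prodR_bounds (weight m r) s (fun t => weight_bounds m r t Hr)) as HF.
  fold (Fw m r s) in HF.
  pose proof (zeros_bounds s) as HZ. rewrite Hl in HZ.
  assert (Hactive : a * (INR N - zeros s) < zeros s * Fw m r s).
  { unfold majorant, zero_frac in Hact.
    apply (Rmult_lt_compat_r (INR N)) in Hact; auto.
    replace ((zeros s / INR N * (1 - Fw m r s) + a * (INR N - zeros s) / INR N) * INR N)
      with (zeros s - zeros s * Fw m r s + a * (INR N - zeros s)) in Hact by (field; lra).
    replace (zeros s / INR N * INR N) with (zeros s) in Hact by (field; lra). lra. }
  assert (HZpos : 0 < zeros s) by nra.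
  assert (HFpos : 0 < Fw m r s) by nra.
  assert (HZr : INR N * mu <= zeros s * r).
  { assert (HaN : a * INR N < 2 * zeros s) by nra.
    assert (2 * (INR N * mu) = r * (a * INR N)) by (rewrite (Rmult_comm (INR N) mu), <- (Rmult_assoc 2), <- Har; ring). nra. }
  assert (Hwpos : forall t, In t s -> 0 < weight m r t)
    by (apply prodR_pos_each; [intros t; apply weight_bounds; auto | exact HFpos]).
  pose proof (ZF_submartingale N mu s (weight m r) HN (Rlt_le _ _ Hmu) Hl eq_refl Hwpos HZpos
    (fun t Ht => weight_local_condition m r N mu (zeros s) t Hr (Rlt_le _ _ Hmu)
                   (Rlt_le _ _ HZpos) HZr (Hwpos t Ht))) as Hsub.
  fold (Fw m r s) in Hsub.
  assert (Hform : forall x, majorant N m r a x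
     = a * (fun _ => 1) x + (1 - a) / INR N * zeros x + (- / INR N) * (zeros x * Fw m r x)).
  { intros x. unfold majorant, zero_frac. field. lra. }
  rewrite (E_ext N mu s _ _ Hform), E_lin, E_one, E_zeros, Hform by (auto; lra).
  unfold Fw in *. assert (0 < / INR N) by (apply Rinv_0_lt_compat; lra). nra.
Qed.

(* V is superharmonic: before a type-m birth compare with the smaller of Z/N and
   the majorant; after it, F = 0 and only Z/N matters. *)
Lemma Vmaj_superharmonic (N m : nat) (mu a r : R) (s : config) (f : bool) :
  (1 <= N)%nat -> (1 <= m)%nat -> 0 < mu -> 0 < a <= 1 -> 0 < r <= 1 -> a * r = 2 * mu ->
  length s = N -> E N mu s (fun x => Vmaj N m r a x (f || has_type m x)) <= Vmaj N m r a s f.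
Proof.
  intros HN Hm Hmu Ha Hr Har Hl.
  assert (Hh : E N mu s (fun x => Vmaj N m r a x (f || has_type m x)) <= zero_frac N s).
  { rewrite <- (E_zero_frac N mu s) by (auto; lra). apply E_mono; auto; try lra.
    intros x _. unfold Vmaj. destruct (f || has_type m x); [lra | apply Rmin_l]. }
  destruct f; [exact Hh |]. unfold Vmaj at 2.
  destruct (Rle_lt_dec (zero_frac N s) (majorant N m r a s)) as [Hle|Hlt].
  - rewrite Rmin_left; auto.
  - rewrite Rmin_right by lra.
    apply Rle_trans with (E N mu s (majorant N m r a)); [| apply majorant_super; auto].
    apply E_mono; auto; try lra. intros x Hx. simpl orb. unfold Vmaj.
    destruct (has_type m x) eqn:Ht; [| apply Rmin_r].
    unfold majorant. rewrite Fw_has_type by (auto; lra).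
    pose proof (zeros_bounds x) as HZ. rewrite Hx in HZ.
    assert (0 <= a * (INR N - zeros x) / INR N).
    { unfold Rdiv. apply Rmult_le_pos; [nra | left; apply Rinv_0_lt_compat, lt_0_INR; lia]. }
    lra.
Qed.

Lemma has_type_init (m N : nat) : (2 <= m)%nat -> has_type m (init_config N) = false.
Proof.
  intros Hm. unfold has_type, init_config. simpl.
  destruct (Nat.eqb m 1) eqn:E; [apply Nat.eqb_eq in E; lia |]. simpl.
  induction (N - 1)%nat; simpl; auto.
  destruct (Nat.eqb m 0) eqn:E2; [apply Nat.eqb_eq in E2; lia | auto].
Qed.

Lemma majorant_init (N m : nat) (r a : R) : (1 <= N)%nat ->
  INR N * majorant N m r a (init_config N) = (INR N - 1) * Rpower r (expo m 1) + a.
Proof.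
  intros HN. assert (0 < INR N) by (apply lt_0_INR; lia).
  assert (Hf : Fw m r (repeat 0%nat (N - 1)) = 1).
  { unfold Fw. induction (N - 1)%nat; simpl; [reflexivity | rewrite IHn; unfold weight; simpl; ring]. }
  assert (Hz : zeros (repeat 0%nat (N - 1)) = INR (N - 1)).
  { rewrite all_zero_zeros, repeat_length; [reflexivity |].
    clear. induction (N - 1)%nat as [|k IH]; [reflexivity | exact IH]. }
  unfold majorant, zero_frac, init_config, Fw, zeros in *. cbn [map sumR prodR fold_right] in *.
  fold (sumR (map zero_ind (repeat 0%nat (N - 1)))).
  fold (prodR (map (weight m r) (repeat 0%nat (N - 1)))).
  rewrite Hz, Hf, minus_INR by lia. unfold zero_ind, weight; simpl. field. lra.
Qed.

Lemma qprime_bound (N m : nat) (mu a r : R) :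
  (1 <= N)%nat -> (2 <= m)%nat -> 0 < mu -> 0 < a <= 1 -> 0 < r <= 1 -> a * r = 2 * mu ->
  INR N * qprime N mu m <= (INR N - 1) * Rpower r (expo m 1) + a.
Proof.
  intros HN Hm Hmu Ha Hr Har. pose proof (init_length N HN) as Hl.
  assert (Hub : forall n, p N mu m n (init_config N) (has_type m (init_config N))
                          <= majorant N m r a (init_config N)).
  { intros n. rewrite has_type_init by auto.
    apply Rle_trans with (Vmaj N m r a (init_config N) false); [| apply Rmin_r].
    apply (p_le_superharmonic N mu m (Vmaj N m r a)); auto; try lra.
    - intros s f Hs. apply Vmaj_nonneg; auto; lra.
    - intros s Hs Hz. unfold Vmaj, zero_frac. rewrite all_zero_zeros, Hs by auto.
      right. field. apply not_0_INR. lia.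
    - intros s f Hs _. apply Vmaj_superharmonic; auto; lia. }
  rewrite <- majorant_init by auto. apply Rmult_le_compat_l; [apply pos_INR |].
  apply Rle_cv_lim with (2 := qprime_limit N mu m HN ltac:(lra)) (1 := Hub).
  intros eps Heps. exists 0%nat. intros. unfold Rdist. rewrite Rminus_diag, Rabs_R0. auto.
Qed.

Lemma scaled_qprime_bound (N m : nat) (mu : R) :
  (1 <= N)%nat -> (2 <= m)%nat -> 0 < mu -> INR N * Rpower mu (expo m 1) <= 1 / 4 ->
  INR N * qprime N mu m <= 3 * sqrt (INR N * Rpower mu (expo m 1)).
Proof.
  intros HN Hm Hmu Heps.
  assert (Hc : expo m 1 < 1) by apply expo_bounds.
  set (c := expo m 1) in *.
  assert (HNp : 0 < INR N) by (apply lt_0_INR; lia).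
  set (eps := INR N * Rpower mu c) in *.
  assert (He0 : 0 < eps) by (apply Rmult_lt_0_compat; auto; apply Rpower_pos).
  set (a := sqrt eps).
  assert (Ha0 : 0 < a) by (apply sqrt_lt_R0; auto).
  assert (Haa : a * a = eps) by (apply sqrt_sqrt; lra).
  assert (Ha1 : a <= 1 / 2) by nra.
  set (r := 2 / a * mu).
  assert (Hr0 : 0 < r) by (unfold r; apply Rmult_lt_0_compat; [apply Rdiv_lt_0_compat |]; lra).
  assert (H2a : 1 <= 2 / a).
  { apply (Rmult_le_reg_r a); auto. unfold Rdiv. rewrite Rmult_assoc, Rinv_l by lra. lra. }
  (* r^c <= (2/a) mu^c because 2/a >= 1 and c < 1 *)
  assert (Hrc : Rpower r c <= 2 / a * Rpower mu c).
  { unfold r. rewrite <- Rpower_mult_distr by lra.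
    apply Rmult_le_compat_r; [left; apply Rpower_pos |].
    rewrite <- (Rpower_1 (2 / a)) at 2 by lra. apply Rle_Rpower; lra. }
  assert (HNrc : INR N * Rpower r c <= 2 * a).
  { apply Rle_trans with (INR N * (2 / a * Rpower mu c)); [apply Rmult_le_compat_l; lra |].
    replace (INR N * (2 / a * Rpower mu c)) with (2 * eps / a) by (unfold eps; field; lra).
    rewrite <- Haa. right. field. lra. }
  assert (Hr1 : r <= 1).
  { destruct (Rle_lt_dec r 1) as [? | Hlt]; auto. exfalso.
    assert (1 < Rpower r c).
    { rewrite <- (Rpower_one_base c). apply Rlt_Rpower_l; [apply expo_first_pos | lra]; auto. }
    assert (1 <= INR N) by (apply (le_INR 1); lia). nra. }
  assert (Har : a * r = 2 * mu) by (unfold r; field; lra).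
  pose proof (qprime_bound N m mu a r HN Hm Hmu ltac:(lra) ltac:(lra) Har) as Hq.
  pose proof (Rpower_pos r c). fold c in Hq. nra.
Qed.

Theorem mainTheorem5 (m : nat) (mu : nat -> R) :
  (2 <= m)%nat ->
  (forall N : nat, 0 < mu N) ->
  Un_cv (fun N => INR N * Rpower (mu N) (1 - / 2 ^ (m - 1))) 0 ->
  Un_cv (fun N => INR N * qprime N (mu N) m) 0.
Proof.
  intros Hm Hmu Hcv eps Heps.
  set (d := Rmin (1 / 4) ((eps / 3) * (eps / 3))).
  assert (Hd : 0 < d) by (apply Rmin_glb_lt; nra).
  destruct (Hcv d Hd) as [N0 HN0].
  exists (max N0 1). intros N HN. specialize (HN0 N ltac:(lia)).
  change (1 - / 2 ^ (m - 1)) with (expo m 1) in HN0.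
  set (e := INR N * Rpower (mu N) (expo m 1)) in *.
  assert (He : 0 <= e) by (apply Rmult_le_pos; [apply pos_INR | left; apply Rpower_pos]).
  unfold Rdist in *. rewrite Rminus_0_r, Rabs_right in HN0 by lra.
  pose proof (Rmin_l (1 / 4) ((eps / 3) * (eps / 3))) as Hd1.
  pose proof (Rmin_r (1 / 4) ((eps / 3) * (eps / 3))) as Hd2.
  fold d in Hd1, Hd2.
  pose proof (scaled_qprime_bound N m (mu N) ltac:(lia) Hm (Hmu N) ltac:(fold e; lra)) as Hq.
  pose proof (qprime_nonneg N (mu N) m ltac:(lia) (Rlt_le _ _ (Hmu N))) as Hq0.
  assert (Hsqrt : sqrt e < eps / 3).
  { pose proof (sqrt_sqrt e He). pose proof (sqrt_pos e). nra. }
  rewrite Rminus_0_r, Rabs_right by (apply Rle_ge, Rmult_le_pos; [apply pos_INR | exact Hq0]).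
  fold e in Hq. lra.
Qed.
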